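(* For $\varepsilon\in(0,1)$ let $u^\varepsilon\in C^2([0,\infty))$ be the solution on all of $[0,\infty)$ of the Dirichlet problem $2(u^\varepsilon)^3=\varepsilon(u^\varepsilon)''$ in $(0,\infty)$, $u^\varepsilon(0)=1$. Then $u^\varepsilon\to u\equiv0$ locally uniformly in $(0,\infty)$ as $\varepsilon\to0^+$, and \[ |u^\varepsilon(x)-u(x)|=\frac{\sqrt{\varepsilon}}{x+\sqrt{\varepsilon}}\ge\frac{1}{2x}\sqrt{\varepsilon}\qquad\text{for all }x\ge1. \] In particular, for any $d>1$, the optimal rate of convergence of $u^\varepsilon$ to $u$ in the $L^\infty((1,d))$-norm is $O(\sqrt{\varepsilon})$, i.e., there is $c>0$ with $c\sqrt{\varepsilon}\le\|u^\varepsilon-u\|_{L^\infty((1,d))}\le\sqrt{\varepsilon}$ for all $\varepsilon\in(0,1)$. *)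

From Stdlib Require Import Reals.
From Coquelicot Require Import Coquelicot.
Open Scope R_scope.

Definition C2_nonneg (f : R -> R) : Prop :=
  (forall x, 0 < x -> ex_derive f x /\ ex_derive (Derive f) x) /\
  (forall x, 0 < x -> continuous (Derive_n f 2) x) /\
  filterlim f (at_right 0) (locally (f 0)) /\
  (exists l1 : R, filterlim (Derive f) (at_right 0) (locally l1)) /\
  (exists l2 : R, filterlim (Derive_n f 2) (at_right 0) (locally l2)).

Definition is_dirichlet_solution (eps : R) (f : R -> R) : Prop :=
  C2_nonneg f /\ f 0 = 1 /\
  (forall x, 0 < x -> 2 * (f x) ^ 3 = eps * Derive_n f 2 x).

(* Sup norm of f on the open interval (a,b); for continuous f this is the
   L^oo((a,b)) norm. *)
Definition Linf_norm (f : R -> R) (a b : R) : R :=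
  real (Lub_Rbar (fun y => exists x, a < x < b /\ y = Rabs (f x))).

Definition loc_unif_conv_pos (u : R -> R -> R) (v : R -> R) : Prop :=
  forall a b, 0 < a -> a <= b -> forall eta, 0 < eta ->
    exists delta, 0 < delta /\
      forall eps, 0 < eps < 1 -> eps < delta ->
        forall x, a <= x <= b -> Rabs (u eps x - v x) < eta.

From Stdlib Require Import Reals Lra Classical.
From Coquelicot Require Import Coquelicot.
Open Scope R_scope.

(* With s = sqrt eps, put P = f' + f^2/s and M = f' - f^2/s.  The equation
   s^2 f'' = 2 f^3 is equivalent to P' = (2f/s) P and to M' = -(2f/s) M, and a
   solution of a linear equation y' = a y with continuous a never changes sign
   (Gronwall).  If P < 0, or if P > 0, then f or -f eventually becomes positive
   and satisfies a Riccati inequality g' >= k g^2, so it blows up in finite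
   time, contradicting the existence of f on all of (0, oo).  Hence P = 0, so
   (1/f)' = 1/s, and f(0+) = 1 forces f(x) = s/(x + s); all the estimates are
   then explicit. *)

Lemma continuity_pt_of_is_derive (g : R -> R) x l : is_derive g x l -> continuity_pt g x.
Proof.
  intros D. apply continuity_pt_filterlim. apply (ex_derive_continuous g). now exists l.
Qed.

Lemma nondecreasing_of_derive_ge0 (g g' : R -> R) lo hi : lo <= hi ->
  (forall x, lo <= x <= hi -> is_derive g x (g' x)) ->
  (forall x, lo <= x <= hi -> 0 <= g' x) -> g lo <= g hi.
Proof.
  intros Hle Hd Hpos.
  destruct (MVT_gen g lo hi g') as [c [Hc E]];
    rewrite ?Rmin_left, ?Rmax_right in * by lra.
  - intros x Hx. apply Hd. lra.
  - intros x Hx. exact (continuity_pt_of_is_derive _ _ _ (Hd x Hx)).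
  - assert (0 <= g' c * (hi - lo)) by (apply Rmult_le_pos; [apply Hpos|]; lra). lra.
Qed.

Lemma nonincreasing_of_derive_le0 (g g' : R -> R) lo hi : lo <= hi ->
  (forall x, lo <= x <= hi -> is_derive g x (g' x)) ->
  (forall x, lo <= x <= hi -> g' x <= 0) -> g hi <= g lo.
Proof.
  intros Hle Hd Hneg.
  enough (- g lo <= - g hi) by lra.
  apply (nondecreasing_of_derive_ge0 (fun t => - g t) (fun t => - g' t)); [lra| |].
  - intros x Hx. exact (is_derive_opp _ _ _ (Hd x Hx)).
  - intros x Hx. specialize (Hneg x Hx). lra.
Qed.

Lemma is_derive_minus_linear (g : R -> R) c x l :
  is_derive g x l -> is_derive (fun t => g t - c * t) x (l - c).
Proof.
  intros D. auto_derive; [now exists l|].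
  change (Derive (fun t => g t) x) with (Derive g x).
  rewrite (is_derive_unique _ _ _ D). ring.
Qed.

Lemma abs_bounded_on_segment (a : R -> R) lo hi : lo <= hi ->
  (forall t, lo <= t <= hi -> continuity_pt a t) ->
  exists K, forall t, lo <= t <= hi -> Rabs (a t) <= K.
Proof.
  intros Hle Hc.
  destruct (continuity_ab_maj (fun t => Rabs (a t)) lo hi Hle) as [m [Hm _]].
  - intros t Ht. apply (continuity_pt_comp a Rabs); [now apply Hc|apply Rcontinuity_abs].
  - now exists (Rabs (a m)).
Qed.

Lemma linear_ode_sq_bound (y a : R -> R) K lo hi : lo <= hi ->
  (forall x, lo <= x <= hi -> is_derive y x (a x * y x)) ->
  (forall x, lo <= x <= hi -> Rabs (a x) <= K) ->
  y lo ^ 2 <= y hi ^ 2 * exp (2 * K * (hi - lo)) /\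
  y hi ^ 2 <= y lo ^ 2 * exp (2 * K * (hi - lo)).
Proof.
  intros Hle Hd Hb.
  set (w c t := y t ^ 2 * exp (2 * c * t)).
  assert (Dw : forall c x, lo <= x <= hi ->
    is_derive (w c) x (2 * (a x + c) * (y x ^ 2 * exp (2 * c * x)))).
  { intros c x Hx. pose proof (Hd x Hx) as D. unfold w. auto_derive.
    - now exists (a x * y x).
    - change (Derive (fun t => y t) x) with (Derive y x).
      rewrite (is_derive_unique _ _ _ D). ring. }
  assert (Hw : forall c t, w c t * exp (- (2 * c * t)) = y t ^ 2).
  { intros c t. unfold w. rewrite Rmult_assoc, <- exp_plus, Rplus_opp_r, exp_0. ring. }
  split.
  - assert (W : w K lo <= w K hi).
    { apply (nondecreasing_of_derive_ge0 _ _ lo hi Hle (Dw K)).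
      intros x Hx. pose proof (proj1 (Rabs_le_between _ _) (Hb x Hx)).
      apply Rmult_le_pos; [lra|]. apply Rmult_le_pos; [apply pow2_ge_0|apply Rlt_le, exp_pos]. }
    rewrite <- (Hw K lo), <- (Hw K hi), (Rmult_assoc (w K hi)), <- exp_plus.
    replace (- (2 * K * hi) + 2 * K * (hi - lo)) with (- (2 * K * lo)) by ring.
    apply Rmult_le_compat_r; [apply Rlt_le, exp_pos|exact W].
  - assert (W : w (- K) hi <= w (- K) lo).
    { apply (nonincreasing_of_derive_le0 _ _ lo hi Hle (Dw (- K))).
      intros x Hx. pose proof (proj1 (Rabs_le_between _ _) (Hb x Hx)).
      apply Rmult_le_0_r; [lra|]. apply Rmult_le_pos; [apply pow2_ge_0|apply Rlt_le, exp_pos]. }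
    rewrite <- (Hw (- K) lo), <- (Hw (- K) hi), (Rmult_assoc (w (- K) lo)), <- exp_plus.
    replace (- (2 * - K * lo) + 2 * K * (hi - lo)) with (- (2 * - K * hi)) by ring.
    apply Rmult_le_compat_r; [apply Rlt_le, exp_pos|exact W].
Qed.

Lemma linear_ode_root_segment (y a : R -> R) lo hi : lo <= hi ->
  (forall x, lo <= x <= hi -> is_derive y x (a x * y x)) ->
  (forall x, lo <= x <= hi -> continuity_pt a x) ->
  y lo = 0 <-> y hi = 0.
Proof.
  intros Hle Hd Hc.
  destruct (abs_bounded_on_segment a lo hi Hle Hc) as [K HK].
  destruct (linear_ode_sq_bound y a K lo hi Hle Hd HK) as [B1 B2].
  split; intros E; rewrite E in *; nra.
Qed.

Lemma linear_ode_root_spread (y a : R -> R) z x :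
  (forall t, 0 < t -> is_derive y t (a t * y t)) ->
  (forall t, 0 < t -> continuity_pt a t) ->
  0 < z -> 0 < x -> y z = 0 -> y x = 0.
Proof.
  intros Hd Hc Hz Hx E.
  destruct (Rle_or_lt z x) as [L|L].
  - apply (linear_ode_root_segment y a z x L); trivial;
      intros t Ht; [apply Hd|apply Hc]; lra.
  - apply (linear_ode_root_segment y a x z (Rlt_le _ _ L)); trivial;
      intros t Ht; [apply Hd|apply Hc]; lra.
Qed.

Lemma pos_of_no_root (y : R -> R) x1 :
  (forall x, 0 < x -> continuity_pt y x) -> (forall x, 0 < x -> y x <> 0) ->
  0 < x1 -> 0 < y x1 -> forall x, 0 < x -> 0 < y x.
Proof.
  intros Hc Hne Hx1 Hy1 x Hx.
  destruct (Rlt_or_le 0 (y x)) as [|Hle]; [assumption|exfalso].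
  assert (Hneg : y x < 0) by (destruct Hle as [|E]; [assumption|now destruct (Hne x Hx)]).
  destruct (Rlt_or_le x x1) as [L|L].
  - destruct (Ranalysis5.IVT_interv y x x1) as [z [Hz Ez]]; trivial.
    + intros t Ht. apply Hc. lra.
    + apply (Hne z); [lra|exact Ez].
  - destruct (Ranalysis5.IVT_interv (fun t => - y t) x1 x) as [z [Hz Ez]]; try lra.
    + intros t Ht. apply continuity_pt_opp, Hc. lra.
    + destruct L as [|E]; [assumption|subst; lra].
    + apply (Hne z); lra.
Qed.

Lemma linear_ode_pos (y a : R -> R) x1 :
  (forall x, 0 < x -> is_derive y x (a x * y x)) ->
  (forall x, 0 < x -> continuity_pt a x) ->
  0 < x1 -> 0 < y x1 -> forall x, 0 < x -> 0 < y x.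
Proof.
  intros Hd Hc Hx1 Hy1.
  apply pos_of_no_root with x1; trivial.
  - intros x Hx. exact (continuity_pt_of_is_derive _ _ _ (Hd x Hx)).
  - intros z Hz Ez. pose proof (linear_ode_root_spread y a z x1 Hd Hc Hz Hx1 Ez). lra.
Qed.

Lemma linear_ode_neg (y a : R -> R) x1 :
  (forall x, 0 < x -> is_derive y x (a x * y x)) ->
  (forall x, 0 < x -> continuity_pt a x) ->
  0 < x1 -> y x1 < 0 -> forall x, 0 < x -> y x < 0.
Proof.
  intros Hd Hc Hx1 Hy1 x Hx.
  enough (0 < - y x) by lra.
  apply (linear_ode_pos (fun t => - y t) a x1); trivial; [|lra].
  intros t Ht. pose proof (is_derive_opp _ _ _ (Hd t Ht)) as D.
  replace (a t * - y t) with (opp (a t * y t)) by (unfold opp; simpl; ring). exact D.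
Qed.

Lemma riccati_blowup (g g' : R -> R) k x0 : 0 < k ->
  (forall x, x0 <= x -> is_derive g x (g' x)) ->
  (forall x, x0 <= x -> k * g x ^ 2 <= g' x) -> 0 < g x0 -> False.
Proof.
  intros Hk Hd Hg Hg0.
  set (X := x0 + / (k * g x0)).
  assert (HX : x0 <= X) by (unfold X; assert (0 < / (k * g x0)) by
    (apply Rinv_0_lt_compat, Rmult_lt_0_compat; assumption); lra).
  assert (Hpos : forall x, x0 <= x -> 0 < g x).
  { intros x Hx. enough (g x0 <= g x) by lra.
    apply (nondecreasing_of_derive_ge0 g g'); trivial.
    - intros t Ht. apply Hd. lra.
    - intros t Ht. pose proof (Hg t (proj1 Ht)). nra. }
  (* (1/g)' = - g'/g^2 <= -k, so 1/g would reach 0 by time X *)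
  assert (Hinv : / g X + k * X <= / g x0 + k * x0).
  { apply (nonincreasing_of_derive_le0 (fun t => / g t + k * t)
      (fun t => - g' t / g t ^ 2 + k) x0 X HX).
    - intros x Hx. pose proof (Hd x (proj1 Hx)) as D. pose proof (Hpos x (proj1 Hx)).
      auto_derive.
      + split; [now exists (g' x)|split; [lra|trivial]].
      + change (Derive (fun t => g t) x) with (Derive g x).
        rewrite (is_derive_unique _ _ _ D). field. lra.
    - intros x Hx. pose proof (Hg x (proj1 Hx)). pose proof (Hpos x (proj1 Hx)).
      enough (k <= g' x / g x ^ 2) by lra.
      apply Rle_div_r; [apply pow_lt; lra|lra]. }
  assert (E : k * X = k * x0 + / g x0) by (unfold X; field; lra).
  pose proof (Rinv_0_lt_compat _ (Hpos X HX)). lra.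
Qed.

Section CubicEquation.

Variables (f : R -> R) (s : R).
Hypothesis s_gt0 : 0 < s.
Hypothesis f_derive : forall x, 0 < x -> is_derive f x (Derive f x).
Hypothesis f_derive2 : forall x, 0 < x -> is_derive (Derive f) x (2 * f x ^ 3 / s ^ 2).
Hypothesis f_lim0 : filterlim f (at_right 0) (locally 1).

Let a x := 2 * f x / s.
Let P x := Derive f x + f x ^ 2 / s.
Let M x := Derive f x - f x ^ 2 / s.

Lemma f_continuity x : 0 < x -> continuity_pt f x.
Proof. intros Hx. exact (continuity_pt_of_is_derive _ _ _ (f_derive x Hx)). Qed.

Lemma a_continuity x : 0 < x -> continuity_pt a x.
Proof.
  intros Hx. apply continuity_pt_mult; [|apply continuity_pt_const; intros ? ?; reflexivity].
  apply continuity_pt_scal, f_continuity, Hx.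
Qed.

Lemma f_pos_near0 : exists t, 0 < t /\ 0 < f t.
Proof.
  assert (F : at_right 0 (fun t => 0 < t /\ 0 < f t)).
  { apply filter_and.
    - exists posreal_one. intros t _ Ht. exact Ht.
    - apply f_lim0, open_gt, Rlt_0_1. }
  destruct (filter_ex _ F) as [t Ht]. now exists t.
Qed.

Lemma is_derive_P x : 0 < x -> is_derive P x (a x * P x).
Proof.
  intros Hx. pose proof (f_derive x Hx). pose proof (f_derive2 x Hx) as D2.
  unfold P, a. auto_derive.
  - split; [now exists (2 * f x ^ 3 / s ^ 2)|split; [now exists (Derive f x)|trivial]].
  - change (Derive (fun t => f t) x) with (Derive f x).
    rewrite (is_derive_unique (fun t : R => Derive f t) x _ D2). field. lra.
Qed.

Lemma is_derive_M x : 0 < x -> is_derive M x (- a x * M x).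
Proof.
  intros Hx. pose proof (f_derive x Hx). pose proof (f_derive2 x Hx) as D2.
  unfold M, a. auto_derive.
  - split; [now exists (2 * f x ^ 3 / s ^ 2)|split; [now exists (Derive f x)|trivial]].
  - change (Derive (fun t => f t) x) with (Derive f x).
    rewrite (is_derive_unique (fun t : R => Derive f t) x _ D2). field. lra.
Qed.

Lemma P_nonneg x1 : 0 < x1 -> 0 <= P x1.
Proof.
  intros Hx1. apply Rnot_lt_le. intros HP1.
  pose proof (linear_ode_neg P a x1 is_derive_P a_continuity Hx1 HP1) as Pneg.
  assert (f_noninc : forall x y, 0 < x <= y -> f y <= f x).
  { intros x y Hxy. apply (nonincreasing_of_derive_le0 f (Derive f)); [lra| |].
    - intros t Ht. apply f_derive. lra.
    - intros t Ht. pose proof (Pneg t ltac:(lra)). unfold P in *.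
      assert (0 <= f t ^ 2 / s) by (apply Rdiv_le_0_compat; [apply pow2_ge_0|lra]). lra. }
  set (X := x1 + Rabs (f x1) / (- P x1) + 1).
  assert (HX : x1 <= X).
  { unfold X. assert (0 <= Rabs (f x1) / (- P x1))
      by (apply Rdiv_le_0_compat; [apply Rabs_pos|lra]).
    lra. }
  (* if f stayed nonnegative up to X, then P would decrease there and f' <= P x1 *)
  assert (HfX : f X < 0).
  { apply Rnot_le_lt. intros HfX.
    assert (Hf0 : forall t, x1 <= t <= X -> 0 <= f t).
    { intros t Ht. pose proof (f_noninc t X ltac:(lra)). lra. }
    assert (HP : forall t, x1 <= t <= X -> P t <= P x1).
    { intros t Ht. apply (nonincreasing_of_derive_le0 P (fun t => a t * P t)); [lra| |].
      - intros y Hy. apply is_derive_P. lra.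
      - intros y Hy. pose proof (Pneg y ltac:(lra)). pose proof (Hf0 y ltac:(lra)).
        assert (0 <= a y) by (apply Rdiv_le_0_compat; lra). nra. }
    assert (Hlin : f X - P x1 * X <= f x1 - P x1 * x1).
    { apply (nonincreasing_of_derive_le0 (fun t => f t - P x1 * t)
        (fun t => Derive f t - P x1) x1 X HX).
      - intros t Ht. apply is_derive_minus_linear, f_derive. lra.
      - intros t Ht. pose proof (HP t Ht). unfold P in *.
        assert (0 <= f t ^ 2 / s) by (apply Rdiv_le_0_compat; [apply pow2_ge_0|lra]). lra. }
    assert (E : P x1 * (X - x1) = - Rabs (f x1) + P x1) by (unfold X; field; lra).
    pose proof (Rle_abs (f x1)). nra. }
  apply (riccati_blowup (fun t => - f t) (fun t => - Derive f t) (/ s) X).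
  - apply Rinv_0_lt_compat, s_gt0.
  - intros x Hx. apply (is_derive_opp f), f_derive. lra.
  - intros x Hx. pose proof (Pneg x ltac:(lra)). unfold P in *.
    replace (/ s * (- f x) ^ 2) with (f x ^ 2 / s) by (field; lra). lra.
  - lra.
Qed.

Lemma f_sq_eq x : f x ^ 2 = s * (P x - M x) / 2.
Proof. unfold P, M. field. lra. Qed.

Section PositivePNegativeM.

Hypothesis P_pos : forall x, 0 < x -> 0 < P x.
Hypothesis M_neg : forall x, 0 < x -> M x < 0.

Lemma f_pos_PM x : 0 < x -> 0 < f x.
Proof.
  destruct f_pos_near0 as [t [Ht Hft]].
  apply (pos_of_no_root f t f_continuity); trivial.
  intros y Hy E. pose proof (f_sq_eq y). pose proof (P_pos y Hy). pose proof (M_neg y Hy).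
  rewrite E in *. nra.
Qed.

Lemma a_pos_PM x : 0 < x -> 0 < a x.
Proof. intros Hx. pose proof (f_pos_PM x Hx). apply Rdiv_lt_0_compat; lra. Qed.

Lemma P_incr_PM x : 1 <= x -> P 1 <= P x.
Proof.
  intros Hx. apply (nondecreasing_of_derive_ge0 P (fun t => a t * P t)); trivial.
  - intros t Ht. apply is_derive_P. lra.
  - intros t Ht. pose proof (a_pos_PM t ltac:(lra)). pose proof (P_pos t ltac:(lra)). nra.
Qed.

Lemma M_incr_PM x : 1 <= x -> M 1 <= M x.
Proof.
  intros Hx. apply (nondecreasing_of_derive_ge0 M (fun t => - a t * M t)); trivial.
  - intros t Ht. apply is_derive_M. lra.
  - intros t Ht. pose proof (a_pos_PM t ltac:(lra)). pose proof (M_neg t ltac:(lra)). nra.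
Qed.

(* f^2 >= s P / 2 >= s P(1) / 2 keeps f away from 0, so P' = (2f/s) P is bounded below *)
Lemma P_linear_growth_PM : exists k, 0 < k /\ forall x, 1 <= x -> P 1 + k * (x - 1) <= P x.
Proof.
  pose proof (P_pos 1 Rlt_0_1) as HP1.
  set (m := sqrt (s * P 1 / 2)).
  assert (Hm : 0 < m) by (apply sqrt_lt_R0, Rdiv_lt_0_compat; nra).
  assert (f_ge : forall x, 1 <= x -> m <= f x).
  { intros x Hx. pose proof (f_pos_PM x ltac:(lra)). rewrite <- (sqrt_pow2 (f x)) by lra.
    apply sqrt_le_1_alt. rewrite f_sq_eq.
    pose proof (P_incr_PM x Hx). pose proof (M_neg x ltac:(lra)). nra. }
  set (k := 2 / s * (m * P 1)).
  exists k. split; [apply Rmult_lt_0_compat; [apply Rdiv_lt_0_compat|]; nra|].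
  intros x Hx. enough (P 1 - k * 1 <= P x - k * x) by lra.
  apply (nondecreasing_of_derive_ge0 (fun t => P t - k * t) (fun t => a t * P t - k) 1 x Hx).
  - intros t Ht. apply is_derive_minus_linear, is_derive_P. lra.
  - intros t Ht. pose proof (f_ge t (proj1 Ht)). pose proof (P_incr_PM t (proj1 Ht)).
    assert (m * P 1 <= f t * P t) by nra.
    enough (k <= 2 / s * (f t * P t)) by (unfold a; lra).
    apply Rmult_le_compat_l; [apply Rdiv_le_0_compat|]; lra.
Qed.

Lemma P_pos_M_neg_absurd : False.
Proof.
  destruct P_linear_growth_PM as [k [Hk P_lin]].
  pose proof (M_neg 1 Rlt_0_1).
  (* from X on, P >= -3 M, hence f' = (P + M) / 2 >= (P - M) / 4 = f^2 / (2 s) *)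
  set (X := 1 + 3 * (- M 1) / k).
  assert (HX : k * (X - 1) = 3 * (- M 1)) by (unfold X; field; lra).
  assert (HX1 : 1 <= X) by (unfold X; enough (0 <= 3 * (- M 1) / k) by lra;
    apply Rdiv_le_0_compat; lra).
  apply (riccati_blowup f (Derive f) (/ (2 * s)) X).
  - apply Rinv_0_lt_compat. lra.
  - intros x Hx. apply f_derive. lra.
  - intros x Hx. pose proof (P_lin x ltac:(lra)). pose proof (M_incr_PM x ltac:(lra)).
    pose proof (P_pos 1 Rlt_0_1).
    assert (k * (X - 1) <= k * (x - 1)) by (apply Rmult_le_compat_l; lra).
    assert (E1 : Derive f x = (P x + M x) / 2) by (unfold P, M; field; lra).
    assert (E2 : / (2 * s) * f x ^ 2 = (P x - M x) / 4) by (rewrite f_sq_eq; field; lra).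
    rewrite E1, E2. lra.
  - apply f_pos_PM. lra.
Qed.

End PositivePNegativeM.

Lemma P_nonpos x1 : 0 < x1 -> P x1 <= 0.
Proof.
  intros Hx1. apply Rnot_lt_le. intros HP1.
  pose proof (linear_ode_pos P a x1 is_derive_P a_continuity Hx1 HP1) as Ppos.
  destruct (classic (exists x3, 0 < x3 /\ M x3 < 0)) as [[x3 [Hx3 HM3]]|HM].
  - apply P_pos_M_neg_absurd; trivial.
    apply (linear_ode_neg M (fun t => - a t) x3 is_derive_M); trivial.
    intros t Ht. apply continuity_pt_opp, a_continuity, Ht.
  - destruct f_pos_near0 as [t [Ht Hft]].
    apply (riccati_blowup f (Derive f) (/ s) t); trivial.
    + apply Rinv_0_lt_compat, s_gt0.
    + intros x Hx. apply f_derive. lra.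
    + intros x Hx. assert (0 <= M x).
      { apply Rnot_lt_le. intros L. apply HM. exists x. split; [lra|exact L]. }
      unfold M in *. replace (/ s * f x ^ 2) with (f x ^ 2 / s) by (field; lra). lra.
Qed.

Lemma Derive_f_eq x : 0 < x -> Derive f x = - (f x / s) * f x.
Proof.
  intros Hx. pose proof (P_nonneg x Hx). pose proof (P_nonpos x Hx).
  unfold P in *. replace (- (f x / s) * f x) with (- (f x ^ 2 / s)) by (field; lra). lra.
Qed.

Lemma f_pos x : 0 < x -> 0 < f x.
Proof.
  destruct f_pos_near0 as [t [Ht Hft]].
  apply (linear_ode_pos f (fun y => - (f y / s)) t); trivial.
  - intros y Hy. rewrite <- Derive_f_eq by exact Hy. apply f_derive, Hy.
  - intros y Hy. apply continuity_pt_opp, continuity_pt_mult;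
      [apply f_continuity, Hy|apply continuity_pt_const; intros ? ?; reflexivity].
Qed.

Lemma inv_f_eq x : 0 < x -> / f x = 1 + x / s.
Proof.
  intros Hx.
  set (c := / f x - x / s).
  assert (Hc : forall t, 0 < t -> / f t = c + t / s).
  { assert (D : forall y, 0 < y -> is_derive (fun t => / f t - t / s) y zero).
    { intros y Hy. pose proof (f_derive y Hy). pose proof (f_pos y Hy). auto_derive.
      - split; [now exists (Derive f y)|split; [lra|trivial]].
      - change (Derive (fun t => f t) y) with (Derive f y).
        rewrite Derive_f_eq by exact Hy. unfold zero; simpl. field. lra. }
    intros t Ht. unfold c.
    destruct (Rtotal_order t x) as [L|[L|L]]; [|subst; ring|].
    - enough (/ f t - t / s = / f x - x / s) by lra.
      apply (eq_is_derive (fun t => / f t - t / s)); [|exact L].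
      intros y Hy. apply D. lra.
    - enough (/ f x - x / s = / f t - t / s) by lra.
      apply (eq_is_derive (fun t => / f t - t / s)); [|exact L].
      intros y Hy. apply D. lra. }
  assert (L1 : filterlim (fun t => / f t) (at_right 0) (locally 1)).
  { rewrite <- Rinv_1. apply (filterlim_comp _ _ _ f Rinv _ (locally 1) _ f_lim0).
    apply continuous_Rinv. lra. }
  assert (L2 : filterlim (fun t => / f t) (at_right 0) (locally c)).
  { apply (filterlim_ext_loc (fun t => c + t / s)).
    - exists posreal_one. intros t _ Ht. symmetry. apply Hc, Ht.
    - apply (filterlim_filter_le_1 (F := locally 0)); [apply filter_le_within|].
      assert (C : continuous (fun t => c + t / s) 0).
      { apply (ex_derive_continuous (fun t => c + t / s)). auto_derive. lra. }
      unfold continuous in C. cbv beta in C.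
      replace (c + 0 / s) with c in C by (field; lra). exact C. }
  rewrite (Hc x Hx), <- (filterlim_locally_unique _ _ _ L1 L2). reflexivity.
Qed.

Lemma cubic_solution_eq x : 0 < x -> f x = s / (x + s).
Proof.
  intros Hx. pose proof (f_pos x Hx).
  rewrite <- (Rinv_inv (f x)), (inv_f_eq x Hx). field. split; lra.
Qed.

End CubicEquation.

Lemma dirichlet_solution_eq eps f : 0 < eps -> is_dirichlet_solution eps f ->
  forall x, 0 < x -> f x = sqrt eps / (x + sqrt eps).
Proof.
  intros He [[Hd [_ [Hlim _]]] [H0 Heq]].
  apply cubic_solution_eq.
  - apply sqrt_lt_R0, He.
  - intros x Hx. apply Derive_correct, (Hd x Hx).
  - intros x Hx. replace (2 * f x ^ 3 / sqrt eps ^ 2) with (Derive (Derive f) x).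
    + apply Derive_correct, (Hd x Hx).
    + change (Derive (Derive f) x) with (Derive_n f 2 x).
      rewrite pow2_sqrt, Heq by lra. field. lra.
  - now rewrite <- H0.
Qed.

Lemma Linf_norm_bounds (g : R -> R) lo hi x0 c B :
  lo < x0 < hi -> c <= Rabs (g x0) -> (forall x, lo < x < hi -> Rabs (g x) <= B) ->
  c <= Linf_norm g lo hi <= B.
Proof.
  intros Hx0 Hc HB. unfold Linf_norm.
  set (E := fun y => exists x, lo < x < hi /\ y = Rabs (g x)).
  destruct (Lub_Rbar_correct E) as [Hub Hlub].
  assert (U : Rbar_le (Lub_Rbar E) B).
  { apply Hlub. intros y [x [Hx ->]]. apply HB, Hx. }
  assert (L : Rbar_le (Rabs (g x0)) (Lub_Rbar E)) by (apply Hub; now exists x0).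
  destruct (Lub_Rbar E) as [l| |]; simpl in *; try contradiction. lra.
Qed.

Section ExplicitFamily.

Variable u : R -> R -> R.
Hypothesis u_eq : forall eps, 0 < eps < 1 -> forall x, 0 < x ->
  u eps x = sqrt eps / (x + sqrt eps).

Lemma abs_u_eq eps x : 0 < eps < 1 -> 0 < x ->
  Rabs (u eps x - 0) = sqrt eps / (x + sqrt eps).
Proof.
  intros He Hx. pose proof (sqrt_lt_R0 eps (proj1 He)).
  rewrite Rminus_0_r, u_eq by assumption.
  apply Rabs_pos_eq, Rdiv_le_0_compat; lra.
Qed.

Lemma explicit_loc_unif_conv : loc_unif_conv_pos u (fun _ => 0).
Proof.
  intros lo hi Hlo Hle eta Heta.
  assert (Hea : 0 < eta * lo) by (apply Rmult_lt_0_compat; assumption).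
  exists ((eta * lo) ^ 2). split; [apply pow_lt, Hea|].
  intros eps He Hlt x Hx. rewrite abs_u_eq by lra.
  pose proof (sqrt_lt_R0 eps (proj1 He)).
  assert (sqrt eps < eta * lo).
  { rewrite <- (sqrt_pow2 (eta * lo)) by lra. apply sqrt_lt_1; lra. }
  apply Rlt_div_l; nra.
Qed.

Lemma explicit_pointwise eps : 0 < eps < 1 -> forall x, 1 <= x ->
  Rabs (u eps x - 0) = sqrt eps / (x + sqrt eps) /\
  sqrt eps / (x + sqrt eps) >= sqrt eps / (2 * x).
Proof.
  intros He Hx. split; [apply abs_u_eq; lra|].
  pose proof (sqrt_lt_R0 eps (proj1 He)).
  assert (sqrt eps < 1) by (rewrite <- sqrt_1; apply sqrt_lt_1; lra).
  apply Rle_ge, Rmult_le_compat_l; [lra|]. apply Rinv_le_contravar; lra.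
Qed.

Lemma explicit_Linf_rate d : 1 < d -> exists c, 0 < c /\
  forall eps, 0 < eps < 1 ->
    c * sqrt eps <= Linf_norm (fun x => u eps x - 0) 1 d <= sqrt eps.
Proof.
  intros Hd. exists (/ (d + 1)). split; [apply Rinv_0_lt_compat; lra|].
  intros eps He. pose proof (sqrt_lt_R0 eps (proj1 He)).
  assert (sqrt eps < 1) by (rewrite <- sqrt_1; apply sqrt_lt_1; lra).
  apply (Linf_norm_bounds _ 1 d ((1 + d) / 2)); [lra| |].
  - rewrite abs_u_eq by lra. rewrite Rmult_comm.
    apply Rmult_le_compat_l; [lra|]. apply Rinv_le_contravar; lra.
  - intros x Hx. rewrite abs_u_eq by lra. apply Rle_div_l; nra.
Qed.

End ExplicitFamily.

Theorem lemma4p6 (u : R -> R -> R)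
  (Hu : forall eps, 0 < eps < 1 -> is_dirichlet_solution eps (u eps)) :
  let u0 := fun _ : R => 0 in
  loc_unif_conv_pos u u0 /\
  (forall eps, 0 < eps < 1 -> forall x, 1 <= x ->
     Rabs (u eps x - u0 x) = sqrt eps / (x + sqrt eps) /\
     sqrt eps / (x + sqrt eps) >= sqrt eps / (2 * x)) /\
  (forall d, 1 < d -> exists c, 0 < c /\
     forall eps, 0 < eps < 1 ->
       c * sqrt eps <= Linf_norm (fun x => u eps x - u0 x) 1 d <= sqrt eps).
Proof.
  assert (u_eq : forall eps, 0 < eps < 1 -> forall x, 0 < x ->
    u eps x = sqrt eps / (x + sqrt eps)).
  { intros eps He. apply dirichlet_solution_eq; [lra|exact (Hu eps He)]. }
  intros u0. split; [|split].
  - exact (explicit_loc_unif_conv u u_eq).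
  - exact (explicit_pointwise u u_eq).
  - exact (explicit_Linf_rate u u_eq).
Qed.
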